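(* For $n\ge 1$ and all integers $k$, the numbers $T(n,k)$ satisfy $$T(n,k)=\lceil k/2\rceil T(n-1,k)+T(n-1,k-1)+(n-k+1)T(n-1,k-2),$$ with initial conditions $T(0,0)=1$ and $T(0,k)=0$ for $k\ne 0$.
   Context: For a permutation $\pi$ of $[n]=\{1,\dots,n\}$, a double descent is an index $i\in[n-2]$ with $\pi(i)>\pi(i+1)>\pi(i+2)$; $\pi$ is simsun if for every $k\in[n]$ the subword of $\pi$ consisting of the letters in $[k]$ (in order of appearance) has no double descents. Let $\mathcal{RS}_n$ be the set of simsun permutations of $[n]$. The number of up-down runs ${\rm uprun}(\pi)$ is the number of alternating runs of the sequence $0,\pi(1),\pi(2),\dots,\pi(n)$, i.e. one plus the number of interior positions of this sequence at which it changes direction (from increasing to decreasing or vice versa). Let $T(n,k)=\#\{\pi\in\mathcal{RS}_n:{\rm uprun}(\pi)=k\}$ for $n\ge1$ (and $T(n,k)=0$ for $k<0$). *)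

From mathcomp Require Import all_boot all_order all_algebra all_fingroup.
Set Implicit Arguments. Unset Strict Implicit. Unset Printing Implicit Defensive.
Import GRing.Theory Num.Theory.

(* A permutation p of [n] = {1..n} is represented by p : 'S_n (a permutation
   of 'I_n = {0..n-1}); its one-line word is pi(1),...,pi(n) with
   pi(i+1) = (p i) + 1. *)
Definition word n (p : 'S_n) : seq nat := [seq (p i).+1 | i <- enum 'I_n].

Definition has_double_descent (s : seq nat) : bool :=
  has (fun i => (nth 0 s i.+1 < nth 0 s i) && (nth 0 s i.+2 < nth 0 s i.+1))
      (iota 0 (size s - 2)).

Definition simsun n (p : 'S_n) : bool :=
  [forall k : 'I_n, ~~ has_double_descent [seq x <- word p | x <= k.+1]].

Definition direction_changes (s : seq nat) : nat :=
  count (fun j => (nth 0 s j.-1 < nth 0 s j) != (nth 0 s j < nth 0 s j.+1))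
        (iota 1 (size s - 2)).

(* number of up-down runs: alternating runs of 0, pi(1), ..., pi(n) *)
Definition uprun n (p : 'S_n) : nat := (direction_changes (0 :: word p)).+1.

Definition T (n : nat) (k : int) : int :=
  match n, k with
  | 0, Posz m => (m == 0)%:R
  | n'.+1, Posz m => (#|[set p : 'S_n'.+1 | simsun p && (uprun p == m)]|)%:Z
  | _, Negz _ => 0
  end.

From mathcomp Require Import all_boot all_order all_algebra all_fingroup.
From mathcomp Require Import zify.
Set Implicit Arguments. Unset Strict Implicit. Unset Printing Implicit Defensive.

(* A simsun permutation of [n+1] arises in exactly one way by inserting the
   letter n+1 into a simsun permutation s of [n] at a position creating no
   double descent, because its restrictions to [k], k <= n, are those of s.
   If 0s has r up-down runs, inserting n+1 inside a descent, or at the end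
   after an ascent, keeps r runs (ceil(r/2) positions); exactly one position,
   the end after a descent or just before a final ascent, gives r+1 runs;
   inserting inside an ascent gives r+2 runs when the next step is an ascent
   (n-r positions) and a double descent otherwise. *)

(* [turns up a l] is the number of direction changes of [a :: l] and
   [ddfree down a l] tests [a :: l] for double descents, where [up] ([down])
   records whether the step leading into [a] is an ascent (a descent). *)
Fixpoint turns (up : bool) (a : nat) (l : seq nat) : nat :=
  if l is b :: r then (up != (a < b)) + turns (a < b) b r else 0.

Fixpoint ddfree (down : bool) (a : nat) (l : seq nat) : bool :=
  if l is b :: r then ~~ (down && (b < a)) && ddfree (b < a) b r else true.

Definition insert_at (j x : nat) (l : seq nat) := take j l ++ x :: drop j l.

Lemma insert_at0 x l : insert_at 0 x l = x :: l.
Proof. by rewrite /insert_at take0 drop0. Qed.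

Lemma insert_atS j x b r : insert_at j.+1 x (b :: r) = b :: insert_at j x r.
Proof. by []. Qed.

Lemma insert_at_nil j x : insert_at j x [::] = [:: x].
Proof. by case: j. Qed.

Lemma perm_insert_at j x l : perm_eq (insert_at j x l) (x :: l).
Proof. by rewrite /insert_at -cat1s perm_catCA cat_take_drop. Qed.

Lemma index_insert_at j x l : x \notin l -> j <= size l -> index x (insert_at j x l) = j.
Proof.
move=> xNl le_j; rewrite /insert_at index_cat.
have -> : (x \in take j l) = false by apply/negbTE; apply: contra xNl; apply: mem_take.
by rewrite size_takel //= eqxx addn0.
Qed.

Lemma take_drop_insert_at j x l :
  j <= size l -> take j (insert_at j x l) ++ drop j.+1 (insert_at j x l) = l.
Proof.
move=> le_j; rewrite /insert_at take_size_cat ?size_takel // drop_cat size_takel //.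
by rewrite ltnNge leqnSn /= subSnn /= drop0 cat_take_drop.
Qed.

Lemma count_iota0S (P : pred nat) n :
  count P (iota 0 n.+1) = P 0 + count (fun j => P j.+1) (iota 0 n).
Proof. by rewrite /= -(addn0 1) iotaDl count_map. Qed.

Lemma neq_ltnN a b : a != b -> ~~ (a < b) = (b < a).
Proof. by move=> neq_ab; rewrite -leqNgt leq_eqVlt eq_sym (negbTE neq_ab). Qed.

Section InsertMax.
Variable x : nat.

Definition adds_turns d up a l j :=
  ddfree (~~ up) a (insert_at j x l) && (turns up a (insert_at j x l) == turns up a l + d).

Definition count_insert d up a l := count (adds_turns d up a l) (iota 0 (size l).+1).

Definition admissible up a l :=
  [/\ uniq (a :: l), all (fun y => y < x) (a :: l) & ddfree (~~ up) a l].

Lemma admissible_ltn up a l : admissible up a l -> a < x.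
Proof. by case=> _ /andP []. Qed.

Lemma admissible_neq up a b r : admissible up a (b :: r) -> a != b.
Proof. by case=> /= /andP [aNbr _] _ _; apply: contraNneq aNbr => ->; rewrite inE eqxx. Qed.

Lemma admissible_up up a b r : admissible up a (b :: r) -> b < a -> up.
Proof. by case=> _ _ /= /andP [+ _] ltba; rewrite ltba andbT negbK. Qed.

Lemma admissible_behead up a b r : admissible up a (b :: r) -> admissible (a < b) b r.
Proof.
move=> adm; have neq_ab := admissible_neq adm.
case: adm => /= /andP [_ uniq_br] /and3P [_ ltbx all_r] /andP [_ ddf].
by split => //=; rewrite ?ltbx // neq_ltnN.
Qed.

Lemma count_insert_nil d up a : a < x -> count_insert d up a [::] = ((~~ up : nat) == d).
Proof.
move=> ltax; rewrite /count_insert /adds_turns /= addn0 ltax (ltnNge x a) (ltnW ltax).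
by case: up.
Qed.

Lemma count_insert_cons d up a b r : admissible up a (b :: r) ->
  count_insert d up a (b :: r) =
    (if b < a then d == 0 else if r is c :: _ then (b < c) && (d == 2) else d == 1)
    + count_insert d (a < b) b r.
Proof.
move=> adm; have neq_ab := admissible_neq adm; have up_ba := admissible_up adm.
have /and3P [ltax ltbx _] : all (fun y => y < x) [:: a, b & r] by case: adm.
have /andP [Nup_ba ddf_br] : ~~ (~~ up && (b < a)) && ddfree (b < a) b r by case: adm.
rewrite /count_insert /adds_turns count_iota0S; congr (_ + _); last first.
  by apply: eq_count => j; rewrite insert_atS /= Nup_ba neq_ltnN // -addnA eqn_add2l.
rewrite insert_at0 /= ltax (ltnNge x a) (ltnW ltax) (ltnNge x b) (ltnW ltbx) /= ltbx.
case: (ltngtP a b) neq_ab up_ba ddf_br => //= lt_ab _; last first.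
  by move/(_ isT) => -> -> /=; apply/eqP/eqP; lia.
move=> _; case: r adm => [|c r] adm /= ddf.
  by case: up adm Nup_ba => _ _; apply/eqP/eqP; lia.
have neq_bc := admissible_neq (admissible_behead adm).
rewrite ddf andbT; case: (ltngtP b c) neq_bc => //= _ _; rewrite ?andbF //.
by case: up adm Nup_ba => _ _; apply/eqP/eqP; lia.
Qed.

Lemma count_insert1 up a l : admissible up a l -> l != [::] -> count_insert 1 up a l = 1.
Proof.
elim: l up a => [//|b r IH] up a adm _.
have adm' := admissible_behead adm; have neq_ab := admissible_neq adm.
rewrite count_insert_cons //; case: r IH adm adm' => [|c r] IH adm adm'.
  by rewrite count_insert_nil ?(admissible_ltn adm'); case: (ltngtP a b) neq_ab.
by rewrite IH //; case: (ltngtP a b) neq_ab => //=; rewrite andbF.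
Qed.

Lemma count_insert0 up a l : admissible up a l -> count_insert 0 up a l = (turns up a l + up + 1)./2.
Proof.
elim: l up a => [|b r IH] up a adm.
  by rewrite count_insert_nil ?(admissible_ltn adm) //; case: up {adm}.
have adm' := admissible_behead adm; have neq_ab := admissible_neq adm.
rewrite count_insert_cons // IH //=.
case: (ltngtP a b) neq_ab (admissible_up adm) => //= _ _.
  by case: r {IH adm adm'} => [|c r]; case: up => /=; rewrite ?andbF; lia.
by move=> /(_ isT) -> /=; lia.
Qed.

Lemma count_insert2 up a b r : admissible up a (b :: r) ->
  count_insert 2 up a (b :: r) + turns up a (b :: r) + (up && (a < b)) = size (b :: r).
Proof.
elim: r up a b => [|c r IH] up a b adm; have neq_ab := admissible_neq adm.
  rewrite count_insert_cons // count_insert_nil ?(admissible_ltn (admissible_behead adm)) //=.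
  by case: (ltngtP a b) neq_ab (admissible_up adm) => //= _ _; case: up {adm} => // /(_ isT).
rewrite count_insert_cons //=; have := IH _ _ _ (admissible_behead adm); rewrite /= => {}IH.
case: (ltngtP a b) neq_ab (admissible_up adm) IH => //= _ _.
  by case: (b < c); case: up {adm} => /= IH; lia.
by move=> /(_ isT) -> IH /=; lia.
Qed.

Lemma turns_insert up a l j : admissible up a l -> ddfree (~~ up) a (insert_at j x l) ->
  turns up a l <= turns up a (insert_at j x l) <= turns up a l + 2.
Proof.
elim: l up a j => [|b r IH] up a j adm.
  by rewrite insert_at_nil /= (admissible_ltn adm); case: up {adm}.
have adm' := admissible_behead adm; have neq_ab := admissible_neq adm.
case: j => [|j]; last first.
  rewrite insert_atS /= => /andP [_ ddf].
  by have := IH _ _ j adm'; rewrite neq_ltnN // => /(_ ddf); lia.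
have ltax := admissible_ltn adm; have ltbx := admissible_ltn adm'.
rewrite insert_at0 /= ltax ltbx (ltnNge x a) (ltnW ltax) (ltnNge x b) (ltnW ltbx) /=.
case: (ltngtP a b) neq_ab (admissible_up adm) => //= _ _; last by move/(_ isT) ->; lia.
case: r adm' {IH adm} => [|c r] adm' _ /=; first by case: up; lia.
have neq_bc := admissible_neq adm'.
by case: (ltngtP b c) neq_bc => //= _ _; case: up; lia.
Qed.

End InsertMax.

Lemma has_double_descent_cons a b c l : has_double_descent [:: a, b, c & l] =
  ((b < a) && (c < b)) || has_double_descent [:: b, c & l].
Proof. by rewrite /has_double_descent /= !subn2 /= -(addn0 1) iotaDl has_map. Qed.

Lemma ddfree_has_double_descent a b l :
  ddfree (b < a) b l = ~~ has_double_descent [:: a, b & l].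
Proof. by elim: l a b => [|c l IH] a b //=; rewrite IH has_double_descent_cons negb_or. Qed.

Lemma ddfree0 s : ddfree false 0 s = ~~ has_double_descent s.
Proof.
case: s => [|b r] //=; rewrite (ddfree_has_double_descent 0 b r).
by case: r => [|c r] //; rewrite has_double_descent_cons.
Qed.

Lemma direction_changes_cons a b c l : direction_changes [:: a, b, c & l] =
  ((a < b) != (b < c)) + direction_changes [:: b, c & l].
Proof.
by rewrite /direction_changes /= !subn2 /= (iotaDl 2 0) (iotaDl 1 0) !count_map.
Qed.

Lemma direction_changes_turns a b l : direction_changes [:: a, b & l] = turns (a < b) b l.
Proof. by elim: l a b => [|c l IH] a b //; rewrite direction_changes_cons IH. Qed.

Lemma direction_changes0 s : 0 \notin s -> direction_changes (0 :: s) = turns true 0 s.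
Proof.
case: s => [|b r] //; rewrite inE negb_or => /andP [b_neq0 _].
by rewrite direction_changes_turns /= lt0n eq_sym b_neq0.
Qed.

Fixpoint perm_words n : seq (seq nat) :=
  if n is m.+1 then [seq insert_at j m.+1 s | s <- perm_words m, j <- iota 0 m.+1]
  else [:: [::]].

Lemma perm_wordsS n :
  perm_words n.+1 = [seq insert_at j n.+1 s | s <- perm_words n, j <- iota 0 n.+1].
Proof. by []. Qed.

Lemma iota1S n : iota 1 n.+1 = rcons (iota 1 n) n.+1.
Proof. by rewrite -cats1 -{1}(addn1 n) iotaD add1n. Qed.

Lemma mem_perm_words n s : (s \in perm_words n) = perm_eq s (iota 1 n).
Proof.
elim: n s => [|n IH] s.
  by rewrite inE; apply/eqP/idP => [->|/perm_size]; [|case: s].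
rewrite iota1S; have /permPl/permPr -> := perm_rcons n.+1 (iota 1 n).
apply/allpairsP/idP => [[[t j] /= [t_in _ ->]]|perm_s].
  by rewrite (perm_trans (perm_insert_at _ _ _)) // perm_cons -IH.
have s_n : n.+1 \in s by rewrite (perm_mem perm_s) inE eqxx.
move: perm_s; case/splitPr: s_n => s1 s2 perm_s.
have perm_s12 : perm_eq (s1 ++ s2) (iota 1 n).
  by rewrite -(perm_cons n.+1) (perm_trans _ perm_s) // perm_sym -[n.+1 :: s2]cat1s perm_catCA.
exists (s1 ++ s2, size s1) => /=; split; first by rewrite IH.
  rewrite -[_ :: _]/(iota 0 n.+1) mem_iota leq0n add0n ltnS -(size_iota 1 n).
  by rewrite -(perm_size perm_s12) size_cat leq_addr.
by rewrite /insert_at take_size_cat // drop_size_cat.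
Qed.

Lemma uniq_perm_words n : uniq (perm_words n).
Proof.
elim: n => [|n IH] //; apply: allpairs_uniq => //; first exact: iota_uniq.
move=> [s i] [t j] si_in tj_in /= eq_ins.
case: (allpairsP si_in) => [[s' i'] /= [s'_in i'_in [eq_s eq_i]]]; subst s i.
case: (allpairsP tj_in) => [[t' j'] /= [t'_in j'_in [eq_t eq_j]]]; subst t j.
have size_words u : u \in perm_words n -> size u = n.
  by rewrite mem_perm_words => /perm_size ->; rewrite size_iota.
have notin_words u : u \in perm_words n -> n.+1 \notin u.
  by rewrite mem_perm_words => /perm_mem ->; rewrite mem_iota ltnn andbF.
move: i'_in j'_in; rewrite -[_ :: iota 1 n]/(iota 0 n.+1) !mem_iota /= !add0n !ltnS.
rewrite -{1}(size_words _ s'_in) -(size_words _ t'_in) => le_i' le_j'.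
have eq_ij : i' = j'.
  by rewrite -(index_insert_at (notin_words _ s'_in) le_i') eq_ins index_insert_at ?notin_words.
by subst j'; rewrite -(take_drop_insert_at n.+1 le_i') eq_ins take_drop_insert_at.
Qed.

Lemma size_perm_words n : size (perm_words n) = n`!.
Proof. by elim: n => [|n IH] //; rewrite size_allpairs IH size_iota factS mulnC. Qed.

Lemma perm_eq_word n (p : 'S_n) : perm_eq (word p) (iota 1 n).
Proof.
have -> : word p = map (addn 1) (map val (map p (enum 'I_n))) by rewrite /word -!map_comp.
rewrite (iotaDl 1 0) -val_enum_ord; apply: perm_map; apply: perm_map.
apply: uniq_perm; first by rewrite map_inj_uniq ?enum_uniq //; apply: perm_inj.
  exact: enum_uniq.
by move=> i; rewrite mem_enum; apply/mapP; exists (p^-1 i)%g; rewrite ?mem_enum ?permKV.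
Qed.

Lemma word_inj n : injective (@word n).
Proof.
move=> p q /eq_in_map eq_pq; apply/permP => i.
by have [] := eq_pq i (mem_enum _ i); apply: val_inj.
Qed.

Lemma perm_eq_words n : perm_eq (map (@word n) (enum 'S_n)) (perm_words n).
Proof.
have uniq_words : uniq (map (@word n) (enum 'S_n)).
  by rewrite map_inj_uniq ?enum_uniq //; apply: word_inj.
apply: uniq_perm => //; first exact: uniq_perm_words.
have sub_words : {subset map (@word n) (enum 'S_n) <= perm_words n}.
  by move=> s /mapP [p _ ->]; rewrite mem_perm_words perm_eq_word.
have size_words : size (perm_words n) <= size (map (@word n) (enum 'S_n)).
  by rewrite size_map -cardT card_Sn size_perm_words.
by case: (uniq_min_size uniq_words sub_words size_words).
Qed.

Definition simsun_seq n (s : seq nat) :=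
  [forall k : 'I_n, ~~ has_double_descent [seq y <- s | y <= k.+1]].

Definition runs (s : seq nat) := (turns true 0 s).+1.

Lemma card_set_count (T : finType) (P : pred T) : #|[set p | P p]| = count P (enum T).
Proof. by rewrite cardsE cardE size_filter enumT unlock. Qed.

Lemma T_count_perm_words m k : T m.+1 (Posz k) =
  count (fun s => simsun_seq m.+1 s && (runs s == k)) (perm_words m.+1).
Proof.
rewrite /T card_set_count -(seq.permP (perm_eq_words m.+1)) [in RHS]count_map enumT.
congr Posz; apply: eq_count => p /=; rewrite /uprun direction_changes0 //.
by rewrite (perm_mem (perm_eq_word p)) mem_iota.
Qed.

Lemma forall_ord_iota n (P : pred nat) : [forall k : 'I_n, P k.+1] = all P (iota 1 n).
Proof.
apply/forallP/allP => [P_ord j|P_iota k]; last first.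
  by apply: P_iota; rewrite mem_iota; have := ltn_ord k; lia.
rewrite mem_iota add1n => /andP [lt0j ltjn].
by have := P_ord (Ordinal (_ : j.-1 < n)); rewrite /= prednK //; apply; lia.
Qed.

Lemma simsun_seq_insert_max m s j : perm_eq s (iota 1 m.+1) ->
  simsun_seq m.+2 (insert_at j m.+2 s) =
    simsun_seq m.+1 s && ~~ has_double_descent (insert_at j m.+2 s).
Proof.
move=> perm_s; rewrite /simsun_seq !(forall_ord_iota _ (fun k => ~~ has_double_descent _)).
have le_s y : y \in s -> y <= m.+1 by rewrite (perm_mem perm_s) mem_iota add1n => /andP [].
rewrite iota1S -cats1 all_cat all_seq1; congr (_ && ~~ has_double_descent _).
  apply: eq_in_all => k; rewrite mem_iota add1n ltnS => /andP [_ le_km].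
  by rewrite /insert_at filter_cat /= leqNgt ltnS le_km /= -filter_cat cat_take_drop.
apply/all_filterP; rewrite (eq_all_r (perm_mem (perm_insert_at _ _ _))) /= leqnn.
by apply/allP => y /le_s /leqW.
Qed.

Lemma simsun_seq_ddfree n s : perm_eq s (iota 1 n) -> simsun_seq n s -> ddfree false 0 s.
Proof.
rewrite ddfree0; case: n => [/perm_size|n perm_s /forallP /(_ ord_max)]; first by case: s.
have le_s : all (fun y => y <= n.+1) s.
  by apply/allP => y; rewrite (perm_mem perm_s) mem_iota add1n => /andP [].
by rewrite /= (all_filterP le_s).
Qed.

Lemma admissible_word m s : perm_eq s (iota 1 m.+1) -> simsun_seq m.+1 s ->
  admissible m.+2 true 0 s.
Proof.
move=> perm_s sim_s; split; last exact: simsun_seq_ddfree sim_s.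
  by rewrite /= (perm_uniq perm_s) iota_uniq (perm_mem perm_s) mem_iota.
by apply/allP => y; rewrite inE (perm_mem perm_s) mem_iota add1n => /orP [/eqP ->|/andP []].
Qed.

Lemma count_insert2_word m s : perm_eq s (iota 1 m.+1) -> simsun_seq m.+1 s ->
  count_insert m.+2 2 true 0 s + runs s = m.+1.
Proof.
move=> perm_s sim_s; have adm := admissible_word perm_s sim_s.
have := perm_size perm_s; rewrite size_iota.
case: s perm_s adm {sim_s} => [//|b r] perm_s adm size_br.
have : b \in iota 1 m.+1 by rewrite -(perm_mem perm_s) mem_head.
rewrite mem_iota => /andP [b_pos _].
by have := count_insert2 adm; rewrite b_pos size_br /runs; lia.
Qed.

Lemma count_linear (T : Type) (P P0 P1 P2 : pred T) c0 c1 c2 s :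
  (forall j, (P j : nat) = c0 * P0 j + c1 * P1 j + c2 * P2 j) ->
  count P s = c0 * count P0 s + c1 * count P1 s + c2 * count P2 s.
Proof. by move=> P_lin; elim: s => [|y s IH] /=; [rewrite !muln0 | rewrite IH P_lin; lia]. Qed.

Lemma eqSn_window t D K : D <= t <= D + 2 ->
  ((t.+1 == K) : nat) =
    (K == D.+1) * (t == D + 0) + (K == D.+2) * (t == D + 1) + (K == D.+3) * (t == D + 2).
Proof.
case/andP=> /subnKC <-; rewrite leq_add2l !eqn_add2l.
by case: (t - D) => [|[|[|d]]] //= _; lia.
Qed.

Lemma count_simsun_insertions m s K : perm_eq s (iota 1 m.+1) -> simsun_seq m.+1 s ->
  count (fun j => simsun_seq m.+2 (insert_at j m.+2 s) && (runs (insert_at j m.+2 s) == K))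
        (iota 0 m.+2) =
  (K == runs s) * (runs s).+1./2 + (K == (runs s).+1) + (K == (runs s).+2) * (m.+1 - runs s).
Proof.
move=> perm_s sim_s; have adm := admissible_word perm_s sim_s.
have count2 := count_insert2_word perm_s sim_s.
have size_s : size s = m.+1 by rewrite (perm_size perm_s) size_iota.
rewrite -[in iota 0 _]size_s /runs; set D := turns true 0 s.
rewrite (@count_linear _ _ (adds_turns m.+2 0 true 0 s) (adds_turns m.+2 1 true 0 s)
  (adds_turns m.+2 2 true 0 s) (K == D.+1) (K == D.+2) (K == D.+3)) => [|j].
  rewrite -!/(count_insert _ _ _ _ _) count_insert0 // count_insert1 -?size_eq0 ?size_s //.
  have -> : count_insert m.+2 2 true 0 s = m.+1 - D.+1 by move: count2; rewrite /runs -/D; lia.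
  by rewrite muln1 !addn1.
rewrite simsun_seq_insert_max // sim_s -ddfree0 /adds_turns.
case ddf: (ddfree _ _ _) => /=; last by rewrite !muln0.
exact: eqSn_window (turns_insert adm ddf).
Qed.

Lemma runs_le m s : perm_eq s (iota 1 m.+1) -> simsun_seq m.+1 s -> runs s <= m.+1.
Proof. by move=> perm_s /(count_insert2_word perm_s) <-; apply: leq_addl. Qed.

Import GRing.Theory Num.Theory.
Local Open Scope ring_scope.

Lemma Posz_count (S : Type) (P : pred S) s : Posz (count P s) = \sum_(y <- s) Posz (P y).
Proof. by elim: s => [|y s IH]; rewrite ?big_nil // big_cons -IH. Qed.

Lemma Posz_count_allpairs (S U : Type) (P : pred U) (f : S -> nat -> U) s t :
  Posz (count P [seq f y j | y <- s, j <- t]) = \sum_(y <- s) Posz (count (fun j => P (f y j)) t).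
Proof. by elim: s => [|y s IH]; rewrite ?big_nil // big_cons -IH /= count_cat count_map. Qed.

Definition insertion_weight m r K : int :=
  (Posz r == K)%:Z * (r.+1./2)%:Z + (Posz r.+1 == K)%:Z + (Posz r.+2 == K)%:Z * (m.+1 - r)%:Z.

Lemma T0 K : T 0 K = (K == 0)%:Z.
Proof. by case: K => [[|k]|k]. Qed.

Lemma T_sum m K : T m.+1 K =
  \sum_(s <- perm_words m.+1) (simsun_seq m.+1 s && (Posz (runs s) == K))%:Z.
Proof.
case: K => [k|k]; last by rewrite big1 // => s _; rewrite andbF.
by rewrite T_count_perm_words Posz_count.
Qed.

Lemma T_sum_insertions m K : T m.+2 K =
  \sum_(s <- perm_words m.+1) (simsun_seq m.+1 s)%:Z * insertion_weight m (runs s) K.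
Proof.
case: K => [k|k]; last by rewrite big1 // => s _; rewrite /insertion_weight !mul0r !add0r mulr0.
rewrite T_count_perm_words perm_wordsS Posz_count_allpairs; apply: eq_big_seq => s.
rewrite mem_perm_words => perm_s; case sim_s: (simsun_seq m.+1 s); last first.
  rewrite mul0r; congr Posz; apply/eqP; rewrite -leqn0 leqNgt -has_count.
  by apply/hasP => -[j _] /=; rewrite simsun_seq_insert_max // sim_s.
rewrite mul1r (count_simsun_insertions k perm_s sim_s) !PoszD !PoszM.
by rewrite /insertion_weight !eqz_nat ![k == _]eq_sym.
Qed.

Lemma insertion_weight_shift m r K : (r <= m.+1)%N ->
  insertion_weight m r K = ((K + 1) %/ 2)%Z * (Posz r == K)%:Z + (Posz r == K - 1)%:Z
                           + (m.+2%:Z - K + 1) * (Posz r == K - 2)%:Z.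
Proof.
move=> le_rm; rewrite /insertion_weight.
have -> : (Posz r == K - 1) = (Posz r.+1 == K) by rewrite eq_sym subr_eq -PoszD addn1.
have -> : (Posz r == K - 2) = (Posz r.+2 == K) by rewrite eq_sym subr_eq -PoszD addn2.
case: (eqVneq (Posz r) K) => [<-|_].
  by rewrite -[Posz r + 1]PoszD divz_nat divn2 addn1; lia.
case: (eqVneq (Posz r.+1) K) => [<-|_]; first by lia.
case: (eqVneq (Posz r.+2) K) => [<-|_]; first by lia.
by rewrite !mulr0 !mul0r !addr0.
Qed.

Theorem theorem9 :
  (T 0 0 = 1 /\ forall k : int, k != 0 -> T 0 k = 0) /\
  forall (n : nat) (k : int), (1 <= n)%N ->
    T n k = ((k + 1) %/ 2)%Z * T n.-1 k + T n.-1 (k - 1)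
            + (n%:Z - k + 1) * T n.-1 (k - 2).
Proof.
split=> [|n K]; first by split=> // k; rewrite T0 => /negbTE ->.
case: n => [//|[_|m _]].
  have sim1 : simsun_seq 1 [:: 1%N] by apply/forallP => -[[]].
  rewrite (T_sum 0) big_seq1 !T0 /= sim1 /runs /= subr_eq0 (subr_eq0 K 2).
  case: (eqVneq K 0) => [->|_] //; case: (eqVneq K 1) => [->|_] //; case: (eqVneq K 2) => [->|_] //.
  by rewrite !mulr0 !addr0.
rewrite [m.+2.-1]/= T_sum_insertions !T_sum !mulr_sumr -!big_split; apply: eq_big_seq => s.
rewrite mem_perm_words => perm_s; case sim_s: (simsun_seq m.+1 s) => /=.
  by rewrite mul1r insertion_weight_shift ?(runs_le perm_s sim_s).
by rewrite !mul0r !mulr0 !addr0.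
Qed.
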